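(* Let $A,B\in\mathbb{C}^{n\times n}$ and let $C=A+B$. Then \[\mathcal{I}(C)\geq \mathcal{I}(A)-\operatorname{rank}(B)\cdot|\Lambda(A)|.\]
   Context: For $M\in\mathbb{C}^{n\times n}$, $\Lambda(M)$ denotes the set of distinct eigenvalues of $M$ and $|\cdot|$ the cardinality of a set. For $\lambda\in\Lambda(M)$, $m_g(M,\lambda)$ denotes the geometric multiplicity of $\lambda$ (dimension of the eigenspace). The derogatory index of $M$ is $\mathcal{I}(M):=\sum_{\lambda\in\Lambda(M)}\big(m_g(M,\lambda)-1\big)$. *)

From HB Require Import structures.
From mathcomp Require Import all_boot all_order all_algebra.
From mathcomp Require Import complex Rstruct.
From Stdlib Require Import Reals ClassicalEpsilon.
Set Implicit Arguments. Unset Strict Implicit. Unset Printing Implicit Defensive.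
Import GRing.Theory Num.Theory.
Local Open Scope ring_scope.

Definition Cx : Type := complex Rdefinitions.R.
HB.instance Definition _ := GRing.ClosedField.on Cx.

(* Lambda(M): a duplicate-free list of the distinct eigenvalues of M
   (chosen classically; it exists since the spectrum is finite). *)
Definition spectrum (n : nat) (M : 'M[Cx]_n) : seq Cx :=
  match excluded_middle_informative
          (exists s : seq Cx, uniq s /\ forall a, a \in s <-> eigenvalue M a) with
  | left H => proj1_sig (constructive_indefinite_description _ H)
  | right _ => [::]
  end.

Definition geom_mult (n : nat) (M : 'M[Cx]_n) (a : Cx) : nat :=
  \rank (eigenspace M a).

Definition derog_index (n : nat) (M : 'M[Cx]_n) : nat :=
  \sum_(a <- spectrum M) (geom_mult M a - 1)%N.

(* For every scalar a, the eigenspace of A at a is ker (A - a) and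
   rank (A + B - a) <= rank (A - a) + rank B, so m_g(A, a) <= m_g(C, a) + rank B.
   Summing m_g(A, a) - 1 over Lambda(A) bounds I(A) by rank B * |Lambda(A)| plus
   the sum of m_g(C, a) - 1 over Lambda(A); as m_g(C, a) = 0 off Lambda(C), that
   sum is at most I(C). *)

From mathcomp Require Import all_boot all_order all_algebra.
From Stdlib Require Import ClassicalEpsilon.
From mathcomp Require Import zify.
Set Implicit Arguments. Unset Strict Implicit. Unset Printing Implicit Defensive.
Import GRing.Theory Num.Theory.
Local Open Scope ring_scope.

Lemma mxrank_ker_addr (F : fieldType) m n (M N : 'M[F]_(m, n)) :
  (\rank (kermx M) <= \rank (kermx (M + N)) + \rank N)%N.
Proof.
rewrite !mxrank_ker.
have rankD := mxrank_add M N; have rankMN := rank_leq_row (M + N).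
lia.
Qed.

Lemma eigenvalue_seq_exists (F : closedFieldType) n (M : 'M[F]_n) :
  exists s : seq F, uniq s /\ forall a, a \in s <-> eigenvalue M a.
Proof.
have [r char_polyE] := closed_field_poly_normal (char_poly M).
exists (undup r); split => [|a]; first exact: undup_uniq.
rewrite mem_undup eigenvalue_root_char char_polyE.
by rewrite (monicP (char_poly_monic M)) scale1r root_prod_XsubC.
Qed.

Lemma spectrum_uniq n (M : 'M[Cx]_n) : uniq (spectrum M).
Proof.
rewrite /spectrum; case: excluded_middle_informative => [ex|[]].
  by case: (constructive_indefinite_description _ ex) => s [].
exact: eigenvalue_seq_exists.
Qed.

Lemma mem_spectrum n (M : 'M[Cx]_n) a : (a \in spectrum M) = eigenvalue M a.
Proof.
rewrite /spectrum; case: excluded_middle_informative => [ex|[]].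
  have [_ sE] := proj2_sig (constructive_indefinite_description _ ex).
  by apply/idP/idP => /sE.
exact: eigenvalue_seq_exists.
Qed.

Lemma geom_mult_notin_spectrum n (M : 'M[Cx]_n) a :
  a \notin spectrum M -> geom_mult M a = 0%N.
Proof.
by rewrite mem_spectrum /eigenvalue negbK /geom_mult => /eqP->; rewrite mxrank0.
Qed.

Lemma geom_mult_addr n (A B : 'M[Cx]_n) a :
  (geom_mult A a <= geom_mult (A + B) a + \rank B)%N.
Proof. by rewrite /geom_mult /eigenspace addrAC mxrank_ker_addr. Qed.

Lemma leq_sum_uniq_support (I : eqType) (s t : seq I) (f : I -> nat) :
  uniq s -> uniq t -> (forall i, i \notin t -> f i = 0%N) ->
  (\sum_(i <- s) f i <= \sum_(i <- t) f i)%N.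
Proof.
move=> s_uniq t_uniq f_supp.
rewrite (bigID (mem t)) /= [X in (_ + X)%N]big1 ?addn0; last by move=> i /f_supp.
have addn_incr m k : (m <= m + k)%N by exact: leq_addr.
apply: (uniq_sub_le_big_cond leqnn addn_incr); rewrite ?filter_uniq //.
by move=> i; rewrite !mem_filter => /andP[].
Qed.

Lemma leq_sum_subn1 (I : eqType) (s t : seq I) (g h : I -> nat) (r : nat) :
  uniq s -> uniq t -> (forall i, i \notin t -> h i = 0%N) ->
  (forall i, g i <= h i + r)%N ->
  (\sum_(i <- s) (g i - 1) <= \sum_(i <- t) (h i - 1) + r * size s)%N.
Proof.
move=> s_uniq t_uniq h_supp g_le.
have termwise i : (g i - 1 <= (h i - 1) + r)%N by have := g_le i; lia.
apply: leq_trans (leq_sum s (fun i _ => termwise i)) _.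
rewrite big_split /= big_const_seq count_predT iter_addn_0 leq_add2r.
by apply: leq_sum_uniq_support => // i /h_supp->.
Qed.

Theorem corollary4p1 (n : nat) (A B : 'M[Cx]_n) :
  let C := A + B in
  ((derog_index A)%:Z - (\rank B * size (spectrum A))%:Z <= (derog_index C)%:Z)%R.
Proof.
cbv zeta; rewrite lerBlDr -PoszD lez_nat /derog_index.
apply: leq_sum_subn1 (spectrum_uniq _) (spectrum_uniq _) _ (geom_mult_addr A B).
exact: geom_mult_notin_spectrum.
Qed.
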